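(* Let $R>0$ and let $t\mapsto p_t$, $t\in[0,1]$, be a convex curve from $e_R^1$ to $e_R^2$ contained in $T(e_R^1,e_R^2)$. Then for all $0\le t_1<t_2<t_3\le 1$ we have $p_{t_2}\in T(p_{t_1},p_{t_3})$.
   Context: Let $Q=[0,\infty)\times[0,\infty)\subset\mathbb{R}^2$, $e_R^1=(R,0)$, $e_R^2=(0,R)$, and let $\arg(p)\in[0,\pi/2]$ denote the polar angle of $p\in Q\setminus\{0\}$. For $u,w\in Q$ with $\arg(u)<\arg(w)$ define $T(u,w)=\{\lambda u+\mu w\in Q:\ \lambda\ge0,\ \mu\ge0,\ \lambda+\mu\ge1,\ \lambda+1\ge\mu,\ \mu+1\ge\lambda\}$. A curve $t\mapsto p_t$ in $Q$, $t\in[0,1]$, from $e_R^1$ to $e_R^2$ (i.e. $p_0=e_R^1$, $p_1=e_R^2$) is called convex if it is continuous, $t\mapsto\arg(p_t)$ is strictly increasing, and the bounded component of $Q\setminus\{p_t: t\in[0,1]\}$ is convex. *)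

(* R : realType, points of the plane are R * R
   (with the product topology, i.e. the Euclidean topology of R^2). *)
From HB Require Import structures.
From mathcomp Require Import all_boot all_order all_algebra.
From mathcomp Require Import all_classical all_reals all_analysis.
Set Implicit Arguments. Unset Strict Implicit. Unset Printing Implicit Defensive.
Import Order.TTheory GRing.Theory Num.Theory numFieldNormedType.Exports.
Local Open Scope classical_set_scope.
Local Open Scope ring_scope.

Section Defs.
Variable R : realType.

Definition Quad : set (R * R) := [set p | 0 <= p.1 /\ 0 <= p.2].

Definition eR1 (r : R) : R * R := (r, 0).
Definition eR2 (r : R) : R * R := (0, r).

(* polar angle of p in Q \ {0}, with value in [0, pi/2] *)
Definition parg (p : R * R) : R :=
  acos (p.1 / Num.sqrt (p.1 ^+ 2 + p.2 ^+ 2)).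

Definition lincomb (l m : R) (u w : R * R) : R * R :=
  (l * u.1 + m * w.1, l * u.2 + m * w.2).

Definition Tset (u w : R * R) : set (R * R) :=
  [set q | Quad q /\ exists l m : R,
     q = lincomb l m u w /\
     [/\ 0 <= l, 0 <= m, 1 <= l + m, m <= l + 1 & l <= m + 1]].

Definition bounded_plane (C : set (R * R)) : Prop :=
  exists M : R, forall q, C q -> `|q.1| <= M /\ `|q.2| <= M.

Definition convex_plane (C : set (R * R)) : Prop :=
  forall a b, C a -> C b -> forall l : R, 0 <= l -> l <= 1 ->
    C (lincomb l (1 - l) a b).

Definition trace (p : R -> R * R) : set (R * R) := p @` `[0, 1].

(* Convex curve in Q from e_R^1 to e_R^2.  The curve lies in Q and avoids 0
   (so that arg(p_t) is defined); "the bounded component of Q \ trace is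
   convex" is stated as: every bounded connected component of Q \ trace
   is convex. *)
Definition convex_curve (r : R) (p : R -> R * R) : Prop :=
  [/\ p 0 = eR1 r /\ p 1 = eR2 r,
      {within `[0, 1], continuous p},
      (forall t, 0 <= t <= 1 -> Quad (p t) /\ p t <> 0),
      (forall s t, 0 <= s <= 1 -> 0 <= t <= 1 -> s < t -> parg (p s) < parg (p t))
    & (forall x, (Quad `\` trace p) x ->
        bounded_plane (connected_component (Quad `\` trace p) x) ->
        convex_plane (connected_component (Quad `\` trace p) x))].

End Defs.

From HB Require Import structures.
From mathcomp Require Import all_boot all_order all_algebra.
From mathcomp Require Import all_classical all_reals all_analysis.
From mathcomp Require Import ring lra.
Set Implicit Arguments. Unset Strict Implicit. Unset Printing Implicit Defensive.
Import Order.TTheory GRing.Theory Num.Theory numFieldNormedType.Exports.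
Local Open Scope classical_set_scope.
Local Open Scope ring_scope.

(* The component K0 of 0 in Q minus the curve lies in the fan
   {k p_t : 0 <= k <= 1}: every ray from 0 in Q meets the curve, at a point with
   x + y >= R, so inside Q the fan is relatively clopen in the complement of the
   curve.  Hence K0 is bounded, hence convex, and it contains every segment
   [0, p_t).  Convexity then forbids p_t2 to lie strictly inside the triangle
   0 p_t1 p_t3; writing p_t2 = l p_t1 + m p_t3 by Cramer's rule, this is
   l + m >= 1.  The same argument for the chords starting at e_R^1 and ending at
   e_R^2, combined with the strip |x - y| <= R imposed by T(e_R^1, e_R^2),
   gives l <= m + 1 and m <= l + 1. *)

Section Clamp.
Variable R : realType.

Definition clamp01 (t : R) : R := Num.max 0 (Num.min 1 t).

Lemma clamp01_itv t : `[0, 1]%classic (clamp01 t).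
Proof.
rewrite /= in_itv /= /clamp01; apply/andP; split; first by rewrite le_max lexx.
by rewrite ge_max ler01 ge_min lexx.
Qed.

Lemma clamp01_id t : 0 <= t <= 1 -> clamp01 t = t.
Proof. by move=> /andP[t0 t1]; rewrite /clamp01 (min_r t1) (max_r t0). Qed.

Lemma continuous_clamp01 : continuous clamp01.
Proof.
move=> x; apply: (@continuous_max R R (fun=> 0)); first exact: cvg_cst.
by apply: (@continuous_min R R (fun=> 1) id); [exact: cvg_cst | exact: cvg_id].
Qed.

Lemma continuous_comp_clamp01 (U : topologicalType) (f : R -> U) :
  {within `[0, 1], continuous f} -> continuous (f \o clamp01).
Proof.
move=> fc x.
have fcx := (@subspace_continuousP R `[0, 1]%classic _ f).1 fc _ (clamp01_itv x).
apply: cvg_comp fcx => W Wx.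
have : nbhs x (fun z => `[0, 1]%classic (clamp01 z) -> W (clamp01 z)).
  exact: continuous_clamp01 Wx.
by apply: filterS => z; apply; exact: clamp01_itv.
Qed.

End Clamp.

Section PlaneGeometry.
Variable R : realType.
Implicit Types (a b c q : R * R) (k l : R).

Definition cross a b : R := a.1 * b.2 - a.2 * b.1.

Definition dilate k a : R * R := (k * a.1, k * a.2).

Definition turn a b c : R :=
  (b.1 - a.1) * (c.2 - a.2) - (b.2 - a.2) * (c.1 - a.1).

Lemma turnE a b c : turn a b c = cross b c + cross a b - cross a c.
Proof. by rewrite /turn /cross; ring. Qed.

Lemma cross_dilate k l a b : cross (dilate k a) (dilate l b) = k * l * cross a b.
Proof. by rewrite /cross /dilate /=; ring. Qed.

Lemma lincomb_dilate l l' k a c :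
  lincomb l l' (dilate k a) (dilate k c) = lincomb (l * k) (l' * k) a c.
Proof. by rewrite /lincomb /dilate /=; congr (_, _); ring. Qed.

Lemma lincomb_cross a b c : cross a c != 0 ->
  b = lincomb (cross b c / cross a c) (cross a b / cross a c) a c.
Proof.
case: a b c => [a1 a2] [b1 b2] [c1 c2]; rewrite /lincomb /cross /= => D0.
by congr (_, _); field.
Qed.

Lemma dilateI k l a : a != 0 -> dilate k a = dilate l a -> k = l.
Proof.
case: a => a1 a2 a0; rewrite /dilate /= => -[e1 e2].
have [a10|a1n0] := eqVneq a1 0; last by apply: (mulIf a1n0).
have a2n0 : a2 != 0 by apply: contraNneq a0 => a20; rewrite a10 a20.
by apply: (mulIf a2n0).
Qed.

Lemma dilate_eq0 k a : 0 < k -> dilate k a = 0 -> a = 0.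
Proof.
case: a => a1 a2 k0; rewrite /dilate => -[/eqP e1 /eqP e2].
by move: e1 e2; rewrite !mulf_eq0 (gt_eqF k0) /= => /eqP-> /eqP->.
Qed.

Lemma quad_sum_gt0 a : Quad a -> a != 0 -> 0 < a.1 + a.2.
Proof.
case: a => a1 a2 [/= a10 a20] a0; rewrite lt_def addr_ge0 // andbT.
apply: contraNneq a0 => s0.
have a1z : a1 = 0 by lra.
have a2z : a2 = 0 by lra.
by rewrite a1z a2z.
Qed.

Lemma cross_eq0_dilate a q : a.1 + a.2 != 0 -> cross a q = 0 ->
  q = dilate ((q.1 + q.2) / (a.1 + a.2)) a.
Proof.
case: a q => [x y] [q1 q2]; rewrite /cross /dilate /= => s0 e.
congr (_, _); rewrite mulrAC; apply: (canRL (mulfK s0)).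
  by rewrite -[RHS]subr0 -e; ring.
by rewrite -[RHS]addr0 -e; ring.
Qed.

Lemma norm_gt0_cos_parg_itv a : Quad a -> a != 0 ->
  0 < Num.sqrt (a.1 ^+ 2 + a.2 ^+ 2) /\ 0 <= a.1 / Num.sqrt (a.1 ^+ 2 + a.2 ^+ 2) <= 1.
Proof.
move=> Qa a0; have [a10 a20] := Qa; have s0 := quad_sum_gt0 Qa a0.
have n0 : 0 < a.1 ^+ 2 + a.2 ^+ 2.
  have := sqr_ge0 a.1; have := sqr_ge0 a.2.
  have [a1p|a1le] := ltrP 0 a.1; first by have := exprn_gt0 2 a1p; lra.
  have a2p : 0 < a.2 by lra.
  by have := exprn_gt0 2 a2p; lra.
have sq0 : 0 < Num.sqrt (a.1 ^+ 2 + a.2 ^+ 2) by rewrite sqrtr_gt0.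
split=> //; rewrite divr_ge0 ?(ltW sq0) //= ler_pdivrMr // mul1r.
rewrite -(ler_pXn2r (_ : 0 < 2)%N) ?nnegrE ?(ltW sq0) // sqr_sqrtr ?(ltW n0) //.
by rewrite lerDl sqr_ge0.
Qed.

(* acos is decreasing, so parg a < parg b compares the cosines x/|.|; squaring
   and clearing denominators leaves (a.2 b.1)^2 < (a.1 b.2)^2. *)
Lemma parg_lt_cross a b : Quad a -> a != 0 -> Quad b -> b != 0 ->
  parg a < parg b -> 0 < cross a b.
Proof.
case: a b => [a1 a2] [b1 b2] Qa a0 Qb b0; have [/= a10 a20] := Qa; have [/= b10 b20] := Qb.
have [nA /andP[ca0 ca1]] := norm_gt0_cos_parg_itv Qa a0.
have [nB /andP[cb0 cb1]] := norm_gt0_cos_parg_itv Qb b0.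
rewrite /parg /cross /= in nA ca0 ca1 nB cb0 cb1 *.
set A := Num.sqrt _ in nA ca0 ca1 *; set B := Num.sqrt _ in nB cb0 cb1 *.
move=> lt_arg.
have : cos (acos (b1 / B)) < cos (acos (a1 / A)).
  by rewrite ltr_cos // in_itv /= ?acos_ge0 ?acos_lepi //; lra.
rewrite !acosK ?in_itv /=; try lra.
rewrite ltr_pdivrMr // mulrAC ltr_pdivlMr // => lt_cos.
have eA : A ^+ 2 = a1 ^+ 2 + a2 ^+ 2 by rewrite sqr_sqrtr // addr_ge0 // sqr_ge0.
have eB : B ^+ 2 = b1 ^+ 2 + b2 ^+ 2 by rewrite sqr_sqrtr // addr_ge0 // sqr_ge0.
have lt_sq : (b1 * A) ^+ 2 < (a1 * B) ^+ 2.
  by rewrite ltr_pXn2r // nnegrE; apply: mulr_ge0; lra.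
rewrite !exprMn eA eB in lt_sq.
have : (b1 * a2) ^+ 2 < (a1 * b2) ^+ 2 by rewrite !exprMn; lra.
by rewrite ltr_pXn2r // ?nnegrE ?mulr_ge0 //; lra.
Qed.

Lemma Tset_of_cross a b c : Quad b -> 0 < cross a c ->
  0 <= cross b c -> 0 <= cross a b -> cross a c <= cross b c + cross a b ->
  cross b c <= cross a b + cross a c -> cross a b <= cross b c + cross a c ->
  Tset a c b.
Proof.
move=> Qb D0 L0 M0 LM1 LM ML; split=> //.
exists (cross b c / cross a c), (cross a b / cross a c); split.
  by apply: lincomb_cross; rewrite gt_eqF.
split; [exact: divr_ge0 (ltW D0) | exact: divr_ge0 (ltW D0) | | |].
- by rewrite -mulrDl ler_pdivlMr // mul1r.
- by rewrite ler_pdivrMr // mulrDl mul1r divfK ?gt_eqF.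
- by rewrite ler_pdivrMr // mulrDl mul1r divfK ?gt_eqF.
Qed.

Definition swap_xy a : R * R := (a.2, a.1).

Lemma cross_swap_xy a b : cross (swap_xy a) (swap_xy b) = cross b a.
Proof. by rewrite /cross /=; ring. Qed.

(* The claim reads cross (b - a) (a + c) <= 0, and r a.2 times it is the middle
   term of the identity below, whose first term is nonnegative by the turn
   hypothesis and whose last term is nonnegative by the strip conditions on a
   and c.  When a.2 = 0 the turn hypothesis forces a = (r, 0). *)
Lemma cross_gap_le r a b c : 0 < r -> 0 <= a.2 -> 0 <= b.2 -> 0 <= c.2 ->
  0 < cross a b -> 0 < cross a c ->
  a.1 - a.2 <= r -> b.1 - b.2 <= r -> c.2 - c.1 <= r -> 0 <= turn (r, 0) a b ->
  cross b c <= cross a b + cross a c.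
Proof.
case: a b c => [x1 y1] [x2 y2] [x3 y3]; rewrite /cross /turn /= !subr0.
move=> hr hy1 hy2 hy3 c12 c13 s1 s2 s3 t12.
suff : (x2 * y3 - y2 * x3) - (x1 * y2 - y1 * x2) <= x1 * y3 - y1 * x3 by lra.
have F : 0 <= (x1 + x3) * y1 - (y1 + y3) * (x1 - r).
  have -> : (x1 + x3) * y1 - (y1 + y3) * (x1 - r) =
     y1 * (x3 + r - y3) + y3 * (y1 - x1 + r) by ring.
  by apply: addr_ge0; apply: mulr_ge0; lra.
have : (x1 * y3 - y1 * x3) * ((x1 - r) * y2 - y1 * (x2 - r))
   + (r * y1) * ((x2 - x1) * (y1 + y3) - (y2 - y1) * (x1 + x3))
   + (x1 * y2 - y1 * x2) * ((x1 + x3) * y1 - (y1 + y3) * (x1 - r)) = 0 by ring.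
have [y1_gt0 Id|y1_le0 _] := ltrP 0 y1.
  have : (r * y1) * ((x2 - x1) * (y1 + y3) - (y2 - y1) * (x1 + x3)) <= 0.
    by have := mulr_ge0 (ltW c13) t12; have := mulr_ge0 (ltW c12) F; lra.
  by rewrite pmulr_rle0 ?mulr_gt0 //; lra.
have y10 : y1 = 0 by lra.
move: c12 t12 s1; rewrite y10 !mul0r !subr0 => c12 t12 s1.
have y2_gt0 : 0 < y2.
  by rewrite lt_def hy2 andbT; apply: contraTneq c12 => ->; rewrite mulr0 ltxx.
have x1r : x1 = r by move: t12; rewrite pmulr_lge0 // subr_ge0; lra.
have : x2 * y3 <= (y2 + r) * y3 by apply: ler_wpM2r => //; lra.
have : y2 * (y3 - x3 - r) <= 0 by apply: mulr_ge0_le0; lra.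
by rewrite x1r; lra.
Qed.

End PlaneGeometry.

Section ConvexCurve.
Variables (R : realType) (r : R) (p : R -> R * R).
Hypothesis r_gt0 : 0 < r.
Hypothesis p_convex : convex_curve r p.
Hypothesis p_in_T : forall t, 0 <= t <= 1 -> Tset (eR1 r) (eR2 r) (p t).

Let pc := p \o @clamp01 R.

Lemma pcE t : 0 <= t <= 1 -> pc t = p t.
Proof. by move=> t01; rewrite /pc /= clamp01_id. Qed.

Lemma continuous_pc : continuous pc.
Proof. by case: p_convex => _ pcont _ _ _; exact: continuous_comp_clamp01. Qed.

Lemma continuous_pc1 : continuous (fun t => (pc t).1).
Proof. by move=> t; apply: (cvg_comp pc fst); [exact: continuous_pc | exact: cvg_fst]. Qed.

Lemma continuous_pc2 : continuous (fun t => (pc t).2).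
Proof. by move=> t; apply: (cvg_comp pc snd); [exact: continuous_pc | exact: cvg_snd]. Qed.

Lemma curve_quad t : 0 <= t <= 1 -> Quad (p t) /\ p t != 0.
Proof. by case: p_convex => _ _ pQ _ _ /pQ [Qpt /eqP pt0]. Qed.

Lemma curve_ends : p 0 = (r, 0) /\ p 1 = (0, r).
Proof. by case: p_convex => -[-> ->]. Qed.

Lemma curve_strip t : 0 <= t <= 1 ->
  [/\ (p t).1 - (p t).2 <= r, (p t).2 - (p t).1 <= r & r <= (p t).1 + (p t).2].
Proof.
move=> /p_in_T [_ [l [m [-> [l0 m0 lm1 ml lm]]]]]; rewrite /lincomb /eR1 /eR2 /=.
rewrite !mulr0 !addr0 !add0r.
have h1 : 0 <= (m + 1 - l) * r by apply: mulr_ge0; [lra | exact: ltW].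
have h2 : 0 <= (l + 1 - m) * r by apply: mulr_ge0; [lra | exact: ltW].
have h3 : 0 <= (l + m - 1) * r by apply: mulr_ge0; [lra | exact: ltW].
by rewrite !mulrBl !mulrDl !mul1r in h1 h2 h3; split; lra.
Qed.

Lemma cross_curve_gt0 s t : 0 <= s -> s < t -> t <= 1 -> 0 < cross (p s) (p t).
Proof.
move=> s0 st t1; case: p_convex => _ _ _ parg_incr _.
have s01 : 0 <= s <= 1 by apply/andP; split; lra.
have t01 : 0 <= t <= 1 by apply/andP; split; lra.
have [Qs ps0] := curve_quad s01; have [Qt pt0] := curve_quad t01.
exact: parg_lt_cross (parg_incr _ _ s01 t01 st).
Qed.

Lemma dilate_curve_inj t t' k k' : 0 <= t <= 1 -> 0 <= t' <= 1 -> 0 <= k -> 0 < k' ->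
  dilate k (p t) = dilate k' (p t') -> k = k'.
Proof.
move=> t01 t'01 k0 k'0 e; have [_ pt0] := curve_quad t01; have [_ pt'0] := curve_quad t'01.
have [k00|kn0] := eqVneq k 0.
  have : dilate k' (p t') = 0 by rewrite -e k00 /dilate !mul0r.
  by move/(dilate_eq0 k'0)/eqP; rewrite (negbTE pt'0).
suff tt' : t = t' by move: e; rewrite tt'; exact: dilateI.
have : k * k' * cross (p t) (p t') = 0 by rewrite -cross_dilate e /cross; ring.
move/eqP; rewrite !mulf_eq0 (negbTE kn0) (gt_eqF k'0) /= => /eqP c0.
move: t01 t'01 => /andP[t0 t1] /andP[t'0 t'1].
have [tt'|tt'|//] := ltgtP t t'.
  by have := cross_curve_gt0 t0 tt' t'1; rewrite c0 ltxx.
by have := cross_curve_gt0 t'0 tt' t1; rewrite /cross in c0 *; lra.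
Qed.

Lemma curve_sum_bounded :
  exists B, forall t, 0 <= t <= 1 -> (p t).1 + (p t).2 <= B.
Proof.
have sum_cont : {within `[0, 1], continuous (fun t => (pc t).1 + (pc t).2)}.
  apply: continuous_subspaceT => x; apply: cvgD; [exact: continuous_pc1 | exact: continuous_pc2].
have [c _ c_max] := EVT_max ler01 sum_cont.
exists ((pc c).1 + (pc c).2) => t t01.
by rewrite -pcE //; apply: c_max; rewrite in_itv.
Qed.

Lemma cross_curve_root q : Quad q -> exists2 t, 0 <= t <= 1 & cross (p t) q = 0.
Proof.
case: q => q1 q2 [/= q10 q20].
have cross_cont : {within `[0, 1], continuous (fun t => cross (pc t) (q1, q2))}.
  apply: continuous_subspaceT => x; rewrite /cross /=.
  by apply: cvgB; apply: cvgM; rewrite ?[X in _ --> X]/=;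
    solve [exact: cvg_cst | exact: continuous_pc1 | exact: continuous_pc2].
have [p0 p1] := curve_ends.
have [c c01 root_c] : exists2 c, c \in `[0, 1] & cross (pc c) (q1, q2) = 0.
  apply: (IVT ler01 cross_cont).
  rewrite !pcE ?lexx ?ler01 // p0 p1 /cross /= !mul0r !subr0 sub0r.
  have rq1 := mulr_ge0 (ltW r_gt0) q10.
  have rq2 := mulr_ge0 (ltW r_gt0) q20.
  by rewrite ge_min le_max oppr_le0 rq1 rq2 orbT.
by exists c; [move: c01; rewrite in_itv | rewrite -pcE //; move: c01; rewrite in_itv].
Qed.

Lemma quad_on_ray q : Quad q -> q != 0 ->
  exists t k, [/\ 0 <= t <= 1, 0 < k & q = dilate k (p t)].
Proof.
move=> Qq q0; have [t t01 root_t] := cross_curve_root Qq.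
have [Qpt pt0] := curve_quad t01.
have spt := quad_sum_gt0 Qpt pt0; have sq := quad_sum_gt0 Qq q0.
exists t, ((q.1 + q.2) / ((p t).1 + (p t).2)); split; first by [].
  exact: divr_gt0.
by apply: cross_eq0_dilate; rewrite ?gt_eqF.
Qed.

Definition off_trace : set (R * R) := @Quad R `\` trace p.
Definition K0 : set (R * R) := connected_component off_trace 0.

Lemma trace_mem q : trace p q <-> exists2 t, 0 <= t <= 1 & p t = q.
Proof.
split; first by case=> t t01 <-; exists t; rewrite // -(@in_itv _ R).
by case=> t t01 <-; exists t; rewrite //= in_itv.
Qed.

Lemma off_trace0 : off_trace 0.
Proof.
split; first by split.
by move=> /trace_mem [t /curve_quad [_ pt0] pt]; move: pt0; rewrite pt eqxx.
Qed.

Lemma off_trace_dilate t k : 0 <= t <= 1 -> 0 <= k < 1 -> off_trace (dilate k (p t)).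
Proof.
move=> t01 /andP[k0 k1]; have [[x0 y0] _] := curve_quad t01.
split; first by split; apply: mulr_ge0.
move=> /trace_mem [t' t'01 e].
have e1 : dilate k (p t) = dilate 1 (p t') by rewrite /dilate !mul1r -surjective_pairing e.
by move: k1; rewrite (dilate_curve_inj t01 t'01 k0 ltr01 e1) ltxx.
Qed.

Lemma continuous_dilate a : continuous (fun k : R => dilate k a).
Proof.
move=> k; rewrite /dilate.
have c1 : (fun l : R => l * a.1) @ k --> k * a.1 by apply: cvgM; [exact: cvg_id | exact: cvg_cst].
have c2 : (fun l : R => l * a.2) @ k --> k * a.2 by apply: cvgM; [exact: cvg_id | exact: cvg_cst].
exact: cvg_pair c1 c2.
Qed.

Lemma K0_dilate t k : 0 <= t <= 1 -> 0 <= k < 1 -> K0 (dilate k (p t)).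
Proof.
move=> t01 k01.
set S := (fun k => dilate k (p t)) @` `[0, 1[%classic.
have S_connected : connected S.
  apply: connected_continuous_connected.
    by apply/connected_intervalP; exact: interval_is_interval.
  by apply: continuous_subspaceT; exact: continuous_dilate.
have S0 : S 0 by exists 0; rewrite /= ?in_itv /= ?lexx ?ltr01 // /dilate !mul0r.
have S_off : S `<=` off_trace.
  by move=> q [k' k'01 <-]; apply: off_trace_dilate => //; move: k'01; rewrite /= in_itv.
apply: (connected_component_max S0 S_off S_connected).
by exists k => //; rewrite /= in_itv.
Qed.

(* {k p_t : t in [0, 1], k in [a, b]}, written through pc to exhibit it as a
   continuous image of a compact rectangle. *)
Definition fan (a b : R) : set (R * R) :=
  (fun z : R * R => dilate z.2 (pc z.1)) @` (`[0, 1]%classic `*` `[a, b]%classic).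

Lemma fan_mem a b q : fan a b q <->
  exists t k, [/\ 0 <= t <= 1, a <= k <= b & q = dilate k (p t)].
Proof.
split.
  case=> -[t k] [/= t01 kab] <-; exists t, k.
  by move: t01 kab; rewrite !in_itv /= => t01 kab; rewrite pcE.
case=> t [k [t01 kab ->]]; exists (t, k); first by split; rewrite /= in_itv.
by rewrite /= pcE.
Qed.

Lemma fan_closed a b : closed (fan a b).
Proof.
apply: compact_closed; first exact: norm_hausdorff.
apply: continuous_compact; last by apply: compact_setX; exact: segment_compact.
apply: continuous_subspaceT => z; rewrite /dilate.
have c1 : (fun z : R * R => z.2 * (pc z.1).1) @ z --> z.2 * (pc z.1).1.
  apply: cvgM; first exact: cvg_snd.
  by apply: (cvg_comp fst (fun t => (pc t).1)); [exact: cvg_fst | exact: continuous_pc1].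
have c2 : (fun z : R * R => z.2 * (pc z.1).2) @ z --> z.2 * (pc z.1).2.
  apply: cvgM; first exact: cvg_snd.
  by apply: (cvg_comp fst (fun t => (pc t).2)); [exact: cvg_fst | exact: continuous_pc2].
exact: cvg_pair c1 c2.
Qed.

Lemma fan01_bound B q : (forall t, 0 <= t <= 1 -> (p t).1 + (p t).2 <= B) ->
  fan 0 1 q -> [/\ 0 <= q.1, 0 <= q.2 & q.1 + q.2 <= B].
Proof.
move=> hB /fan_mem [t [k [t01 /andP[k0 k1] ->]]].
have [[x0 y0] _] := curve_quad t01.
split; rewrite /dilate /= ?mulr_ge0 // -mulrDr.
by have := hB t t01; have := ler_piMl (addr_ge0 x0 y0) k1; lra.
Qed.

Lemma off_trace_fan01_fan1 M q : off_trace q -> fan 0 1 q -> ~ fan 1 M q.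
Proof.
move=> [_ q_off] /fan_mem [t [k [t01 /andP[k0 k1] e]]].
move=> /fan_mem [t' [k' [t'01 /andP[k'1 _] e']]].
have k_eq : k = k' by apply: dilate_curve_inj t01 t'01 k0 _ _; [lra | rewrite -e -e'].
apply: q_off; apply/trace_mem; exists t => //.
by rewrite e k_eq (_ : k' = 1) ?/dilate ?mul1r -?surjective_pairing //; lra.
Qed.

(* Points of the curve have r <= x + y, so a point of Q with x + y < S lies on
   a ray k p_t with k < S / r. *)
Lemma quad_fan01 S q : Quad q -> q.1 + q.2 < S -> ~ fan 1 (S / r) q -> fan 0 1 q.
Proof.
move=> Qq qS q_fan1.
have [->|q0] := eqVneq q 0.
  by apply/fan_mem; exists 0, 0; rewrite lexx ler01 /dilate !mul0r.
have [t [k [t01 k0 e]]] := quad_on_ray Qq q0.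
have [k1|k1] := leP k 1.
  by apply/fan_mem; exists t, k; rewrite (ltW k0) k1.
exfalso; apply: q_fan1; apply/fan_mem; exists t, k; split=> //.
rewrite (ltW k1) ler_pdivlMr //=.
have [_ _ r_sum] := curve_strip t01.
move: qS; rewrite e /dilate /= -mulrDr => qS.
by have := ler_wpM2l (ltW k0) r_sum; lra.
Qed.

(* K0 `&` fan 0 1 is closed, and relatively open in K0 as it equals K0 `&` U. *)
Lemma K0_sub_fan : K0 `<=` fan 0 1.
Proof.
have [B hB] := curve_sum_bounded.
pose U := ~` fan 1 ((B + 1) / r) `&` [set q : R * R | q.1 + q.2 < B + 1].
have U_open : open U.
  apply: openI; first exact/closed_openC/fan_closed.
  apply: (@open_comp _ _ (fun q : R * R => q.1 + q.2) [set x | x < B + 1]); last exact: open_lt.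
  by move=> z _; apply: cvgD; [exact: cvg_fst | exact: cvg_snd].
have fanU q : off_trace q -> fan 0 1 q <-> U q.
  move=> q_off; split=> [q_fan | [q_fan1 qS]]; last exact: quad_fan01 q_off.1 qS q_fan1.
  split; first exact: off_trace_fan01_fan1 q_off q_fan.
  by have [_ _] := fan01_bound hB q_fan; rewrite /=; lra.
have K0_fan : K0 `&` fan 0 1 = K0.
  apply: component_connected.
  - exists 0; split; first exact: connected_component_refl off_trace0.
    by apply/fan_mem; exists 0, 0; rewrite lexx ler01 /dilate !mul0r.
  - exists U => //; apply/seteqP; split=> z [Kz zz]; split=> //;
      exact/(fanU z (connected_component_sub Kz)).
  - by exists (fan 0 1) => //; exact: fan_closed.
by rewrite -K0_fan => q [].
Qed.

Lemma K0_convex : convex_plane K0.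
Proof.
case: p_convex => _ _ _ _; apply; first exact: off_trace0.
have [B hB] := curve_sum_bounded.
exists B => q /K0_sub_fan /(fan01_bound hB) [x0 y0 sB].
by rewrite !ger0_norm //; split; lra.
Qed.

(* If p_t were strictly inside the triangle 0 p_s p_u, it would be a convex
   combination of the points m p_s and m p_u of K0 for some m < 1, so p_t would
   lie in K0, which avoids the trace. *)
Lemma turn_curve_ge0 s t u : 0 <= s -> s < t -> t < u -> u <= 1 ->
  0 <= turn (p s) (p t) (p u).
Proof.
move=> s0 st tu u1.
have t01 : 0 <= t <= 1 by apply/andP; split; lra.
have s01 : 0 <= s <= 1 by apply/andP; split; lra.
have u01 : 0 <= u <= 1 by apply/andP; split; lra.
have D0 := cross_curve_gt0 s0 (lt_trans st tu) u1.
have L0 := cross_curve_gt0 (ltW (le_lt_trans s0 st)) tu u1.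
have M0 := cross_curve_gt0 s0 st (ltW (lt_le_trans tu u1)).
rewrite turnE leNgt; apply/negP => LMD.
set D := cross (p s) (p u) in D0 LMD; set L := cross (p t) (p u) in L0 LMD.
set Mu := cross (p s) (p t) in M0 LMD.
have LM0 : 0 < L + Mu by exact: addr_gt0.
have m01 : 0 <= (L + Mu) / D < 1.
  by rewrite divr_ge0 ?(ltW LM0) ?(ltW D0) //= ltr_pdivrMr // mul1r; lra.
have /andP[l0 l1] : 0 <= L / (L + Mu) <= 1.
  by rewrite divr_ge0 ?(ltW L0) ?(ltW LM0) //= ler_pdivrMr // mul1r; lra.
have K0pt : K0 (p t).
  have -> : p t = lincomb (L / (L + Mu)) (1 - L / (L + Mu))
      (dilate ((L + Mu) / D) (p s)) (dilate ((L + Mu) / D) (p u)).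
    rewrite lincomb_dilate {1}(@lincomb_cross _ (p s) (p t) (p u) (lt0r_neq0 D0)) -/D -/L -/Mu.
    by congr lincomb; field; rewrite ?(gt_eqF D0) ?(gt_eqF LM0).
  by apply: K0_convex l0 l1; apply: K0_dilate.
by case: (connected_component_sub K0pt) => _; apply; apply/trace_mem; exists t.
Qed.

Lemma turn_start_ge0 t u : 0 <= t -> t < u -> u <= 1 -> 0 <= turn (r, 0) (p t) (p u).
Proof.
move=> t0 tu u1; have [p0 _] := curve_ends.
have [->|t_neq0] := eqVneq t 0; first by rewrite p0 /turn /= !subrr !mul0r subrr.
by rewrite -p0; apply: turn_curve_ge0; rewrite // lt_def t_neq0.
Qed.

Lemma turn_end_ge0 t u : 0 <= t -> t < u -> u <= 1 -> 0 <= turn (p t) (p u) (0, r).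
Proof.
move=> t0 tu u1; have [_ p1] := curve_ends.
have [->|u_neq1] := eqVneq u 1; first by rewrite p1 /turn mulrC subrr.
by rewrite -p1; apply: turn_curve_ge0; rewrite // lt_neqAle u_neq1.
Qed.

Lemma cross_gap_start t1 t2 t3 : 0 <= t1 -> t1 < t2 -> t2 < t3 -> t3 <= 1 ->
  cross (p t2) (p t3) <= cross (p t1) (p t2) + cross (p t1) (p t3).
Proof.
move=> t10 t12 t23 t31.
have in01 t : t1 <= t <= t3 -> 0 <= t <= 1 by case/andP=> *; apply/andP; split; lra.
have [t1_01 t2_01 t3_01] : [/\ 0 <= t1 <= 1, 0 <= t2 <= 1 & 0 <= t3 <= 1].
  by split; apply: in01; apply/andP; split; lra.
have [[_ y1] _] := curve_quad t1_01; have [[_ y2] _] := curve_quad t2_01.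
have [[_ y3] _] := curve_quad t3_01.
have [s1 _ _] := curve_strip t1_01; have [s2 _ _] := curve_strip t2_01.
have [_ s3 _] := curve_strip t3_01.
apply: (cross_gap_le r_gt0 y1 y2 y3) s1 s2 s3 _.
- exact: cross_curve_gt0 t10 t12 (ltW (lt_le_trans t23 t31)).
- exact: cross_curve_gt0 t10 (lt_trans t12 t23) t31.
- exact: turn_start_ge0 t10 t12 (ltW (lt_le_trans t23 t31)).
Qed.

(* The reflection (x, y) -> (y, x) exchanges the two ends of the curve. *)
Lemma cross_gap_end t1 t2 t3 : 0 <= t1 -> t1 < t2 -> t2 < t3 -> t3 <= 1 ->
  cross (p t1) (p t2) <= cross (p t2) (p t3) + cross (p t1) (p t3).
Proof.
move=> t10 t12 t23 t31.
have in01 t : t1 <= t <= t3 -> 0 <= t <= 1 by case/andP=> *; apply/andP; split; lra.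
have [t1_01 t2_01 t3_01] : [/\ 0 <= t1 <= 1, 0 <= t2 <= 1 & 0 <= t3 <= 1].
  by split; apply: in01; apply/andP; split; lra.
have [[x1 _] _] := curve_quad t1_01; have [[x2 _] _] := curve_quad t2_01.
have [[x3 _] _] := curve_quad t3_01.
have [s1 _ _] := curve_strip t1_01; have [_ s2 _] := curve_strip t2_01.
have [_ s3 _] := curve_strip t3_01.
have t20 : 0 <= t2 by lra.
have := @cross_gap_le R r (swap_xy (p t3)) (swap_xy (p t2)) (swap_xy (p t1)) r_gt0 x3 x2 x1.
rewrite !cross_swap_xy; apply=> //.
- exact: cross_curve_gt0 t20 t23 t31.
- exact: cross_curve_gt0 t10 (lt_trans t12 t23) t31.
- have -> : turn (r, 0) (swap_xy (p t3)) (swap_xy (p t2)) = turn (p t2) (p t3) (0, r).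
    by rewrite /turn /=; ring.
  exact: turn_end_ge0 t20 t23 t31.
Qed.

End ConvexCurve.

Unset Implicit Arguments.

Theorem lemma3p6 (R : realType) (r : R) (p : R -> R * R) :
  0 < r -> convex_curve r p ->
  (forall t, 0 <= t <= 1 -> Tset (eR1 r) (eR2 r) (p t)) ->
  forall t1 t2 t3 : R, 0 <= t1 -> t1 < t2 -> t2 < t3 -> t3 <= 1 ->
    Tset (p t1) (p t3) (p t2).
Proof.
move=> r_gt0 p_convex p_in_T t1 t2 t3 t10 t12 t23 t31.
have t20 : 0 <= t2 by lra.
have t13 := lt_trans t12 t23.
have [Qpt2 _] : Quad (p t2) /\ p t2 != 0.
  by apply: (curve_quad p_convex); apply/andP; split; lra.
apply: Tset_of_cross => //.
- exact (cross_curve_gt0 p_convex t10 t13 t31).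
- exact/ltW/(cross_curve_gt0 p_convex t20 t23 t31).
- exact/ltW/(cross_curve_gt0 p_convex t10 t12 (ltW (lt_le_trans t23 t31))).
- by have := turn_curve_ge0 r_gt0 p_convex p_in_T t10 t12 t23 t31; rewrite turnE; lra.
- exact (cross_gap_start r_gt0 p_convex p_in_T t10 t12 t23 t31).
- exact (cross_gap_end r_gt0 p_convex p_in_T t10 t12 t23 t31).
Qed.
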